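(* Let $m\ge 2$ be an integer with smallest prime factor $p$, and let $k$ and $d$ be positive integers such that $d<\tfrac{p(m-1)}{m(m-k)}$ (equivalently $d\,m(m-k)<p(m-1)$). Let $S\subseteq\{0,1,\dots,m-1\}$ with $|S|=k$ and let $A=S+m\mathbb{Z}=\{s+mn: s\in S,\ n\in\mathbb{Z}\}$. Then \[h(A^d)\le k^d.\]
   Context: For a set $X\subseteq\mathbb{R}^d$, the Helly number $h(X)$ is the smallest $h$ such that the following holds: for every finite family $\mathcal{F}$ of convex sets in $\mathbb{R}^d$, if every $h$ or fewer sets of $\mathcal{F}$ have a point of $X$ in their intersection, then the intersection of all sets of $\mathcal{F}$ contains a point of $X$. If no such $h$ exists, $h(X)=\infty$. $A^d$ denotes the $d$-fold Cartesian product of $A$. *)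

From HB Require Import structures.
From mathcomp Require Import all_boot all_order all_algebra.
From mathcomp Require Import classical_sets reals.
Set Implicit Arguments. Unset Strict Implicit. Unset Printing Implicit Defensive.
Import Order.TTheory GRing.Theory Num.Theory.
Local Open Scope ring_scope.
Local Open Scope classical_set_scope.

Definition convex_set (R : realType) (d : nat) (C : set 'rV[R]_d) : Prop :=
  forall x y : 'rV[R]_d, C x -> C y ->
    forall t : R, 0 <= t -> t <= 1 -> C (t *: x + (1 - t) *: y).

Definition helly_prop (R : realType) (d : nat) (X : set 'rV[R]_d) (h : nat)
  : Prop :=
  forall (n : nat) (F : 'I_n -> set 'rV[R]_d),
    (forall i, convex_set (F i)) ->
    (forall I : {set 'I_n}, (#|I| <= h)%N ->
       exists x, X x /\ forall i, i \in I -> F i x) ->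
    exists x, X x /\ forall i, F i x.

(* h(X) <= b, where h(X) is the least h satisfying helly_prop (or infinity). *)
Definition helly_number_le (R : realType) (d : nat) (X : set 'rV[R]_d)
  (b : nat) : Prop :=
  exists h : nat, (h <= b)%N /\ helly_prop X h.

Definition residue_set (R : realType) (m : nat) (S : {set 'I_m}) : set R :=
  [set r | exists (s : 'I_m) (z : int), s \in S /\ r = (s%:R + m%:R * z%:~R)].

Definition cart_pow (R : realType) (d : nat) (A : set R) : set 'rV[R]_d :=
  [set x | forall i : 'I_d, A (x ord0 i)].

From HB Require Import structures.
From mathcomp Require Import all_boot all_order all_algebra.
From mathcomp Require Import boolp classical_sets reals.
From mathcomp Require Import ring lra zify.
Set Implicit Arguments. Unset Strict Implicit. Unset Printing Implicit Defensive.
Import Order.TTheory GRing.Theory Num.Theory.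

(* Doignon's argument.  If X meets every polytope with vertices in X in finitely
   many points, then h(X) <= K as soon as, among any more than K points y_i of X,
   two distinct ones have a point of X strictly between them: for a family Y
   minimising |X ∩ conv Y| without a point of X in every conv (Y \ y_i), replacing
   y_a by such an inner point z and then y_b by a common point of the new family
   produces a common point of Y.
   For A = S + mZ and K = k^d, two of the points share their residue vector
   s ∈ S^d, so w := y_b - y_a lies in (mZ)^d; the coordinates of
   y_a + (j/m) w, 0 < j < m, are s_c + j (w_c/m) mod m.  As j varies, each residue
   is attained gcd(w_c/m, m) <= m/p times (or s_c is fixed when m | w_c/m), so at
   most m (m - k)/p values of j are bad for one coordinate, and
   d m (m - k) < p (m - 1) leaves a good j. *)

Section ResidueSteps.
Variables (m : nat) (m_gt0 : 0 < m).

Definition step_res (s w j : nat) : 'I_m := Ordinal (ltn_pmod (s + j * w) m_gt0).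

Lemma card_bad_steps (S : {set 'I_m}) (s : 'I_m) (w : nat) : s \in S ->
  pdiv m * #|[set j : 'I_m | step_res s w j \notin S]| <= #|~: S| * m.
Proof.
move=> sS; set B := [set j | _].
have [mw | mNw] := boolP (m %| w).
  rewrite (@eq_card0 _ B) ?muln0 // => j; rewrite !inE; apply/negbF.
  suff -> : step_res s w j = s by [].
  by apply: val_inj; rewrite /= -modnDmr (eqP (dvdn_mull _ mw)) addn0 modn_small.
set g := gcdn w m; set M := m %/ g.
have g_gt0 : 0 < g by rewrite gcdn_gt0 m_gt0 orbT.
have mE : m = M * g by rewrite divnK ?dvdn_gcdr.
have M_gt1 : 1 < M.
  rewrite ltnNge; apply: contra mNw; case: M mE => [|[|//]] mE _.
    by move: m_gt0; rewrite mE.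
  by rewrite mE mul1n dvdn_gcdl.
have pdiv_le : pdiv m <= M by apply: pdiv_min_dvd M_gt1 _; rewrite mE dvdn_mulr.
have step_inj j1 j2 : s + j1 * w = s + j2 * w %[mod m] -> j1 = j2 %[mod M].
  move=> e12; wlog le12 : j1 j2 e12 / j1 <= j2.
    by move=> wl; case: (leqP j1 j2) => [|/ltnW] le; [|apply/esym]; apply: wl.
  apply/esym/eqP; rewrite eqn_mod_dvd //.
  have : m %| (j2 - j1) * w.
    move/eqP: e12; rewrite eq_sym eqn_modDl eqn_mod_dvd ?leq_mul2r ?le12 ?orbT //.
    by rewrite mulnBl.
  move=> dvd_w; have : m %| gcdn ((j2 - j1) * w) ((j2 - j1) * m).
    by rewrite dvdn_gcd dvd_w dvdn_mull.
  by rewrite -muln_gcdr -/g {1}mE dvdn_pmul2r.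
have quot_lt (j : 'I_m) : j %/ M < g by rewrite ltn_divLR ?(ltnW M_gt1) // mulnC -mE.
pose f (j : 'I_m) := (step_res s w j, Ordinal (quot_lt j)).
have f_inj : injective f.
  move=> j1 j2 [e1 e2]; apply: ord_inj.
  by rewrite (divn_eq j1 M) (divn_eq j2 M) (step_inj _ _ e1) e2.
have : f @: B \subset finset.setX (~: S) [set: 'I_g].
  by apply/fintype.subsetP => _ /imsetP[j jB ->]; rewrite !inE andbT; rewrite inE in jB.
move=> /subset_leq_card; rewrite card_imset // cardsX cardsT card_ord => le_B.
rewrite mulnC (leq_trans (leq_mul le_B (leqnn _))) // -mulnA leq_mul2l.
have le_pg : pdiv m * g <= m by rewrite [leqRHS]mE leq_mul2r pdiv_le orbT.
by rewrite mulnC le_pg orbT.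
Qed.

Lemma exists_common_good_step d (S : {set 'I_m}) (s : 'I_d -> 'I_m) (w : 'I_d -> nat) :
  (forall c, s c \in S) -> d * m * #|~: S| < pdiv m * (m - 1) ->
  exists2 j : 'I_m, 0 < j & forall c, step_res (s c) (w c) j \in S.
Proof.
move=> sS lt_dm.
pose U := \bigcup_(c < d) [set j : 'I_m | step_res (s c) (w c) j \notin S].
have card_U : #|U| < m - 1.
  rewrite -(ltn_pmul2l (pdiv_gt0 m)) (leq_ltn_trans _ lt_dm) //.
  have card_U_sum :
      #|U| <= \sum_(c < d) #|[set j : 'I_m | step_res (s c) (w c) j \notin S]|.
    rewrite /U; elim/big_ind2: _ => [|a A b B le_A le_B|//]; first by rewrite cards0.
    exact: leq_trans (leq_card_setU A B).1 (leq_add le_A le_B).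
  apply: leq_trans (leq_mul (leqnn _) card_U_sum) _.
  rewrite big_distrr /= (@leq_trans (\sum_(c < d) #|~: S| * m)) //.
    by apply: leq_sum => c _; apply: card_bad_steps.
  by rewrite sum_nat_const card_ord mulnA mulnAC.
have [j] : exists j, j \in ~: (U :|: [set Ordinal m_gt0]).
  apply/card_gt0P; rewrite cardsCs finset.setCK card_ord subn_gt0.
  by rewrite (leq_ltn_trans (leq_card_setU _ _).1) // cards1; lia.
rewrite !inE negb_or => /andP[/bigcupP jU j0].
exists j; first by rewrite lt0n; apply: contra j0 => /eqP j0; apply/eqP/val_inj.
by move=> c; apply/negPn/negP => bad; apply: jU; exists c; rewrite ?inE.
Qed.

End ResidueSteps.

Local Open Scope ring_scope.
Local Open Scope classical_set_scope.

Lemma ratio_itv (R : realFieldType) (a b : R) : 0 <= a -> a <= b ->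
  [/\ 0 <= a / b, a / b <= 1 & a / b * b = a].
Proof.
move=> a_ge0 le_ab; have [b0 | b_neq0] := eqVneq b 0.
  have a0 : a = 0 by rewrite b0 in le_ab; lra.
  by rewrite a0 b0 !mul0r ler01 lexx.
have b_gt0 : 0 < b by rewrite lt_neqAle eq_sym b_neq0 (le_trans a_ge0).
by rewrite divr_ge0 ?ler_pdivrMr ?mul1r ?divfK ?(ltW b_gt0).
Qed.

Section ConvexHull.
Variables (R : realType) (d : nat).
Local Notation V := 'rV[R]_d.

Definition hull (G : set V) : set V :=
  [set x | forall C, convex_set C -> G `<=` C -> C x].

Lemma subset_hull (G : set V) : G `<=` hull G.
Proof. by move=> x Gx C _; apply. Qed.

Lemma hull_min (G C : set V) : convex_set C -> G `<=` C -> hull G `<=` C.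
Proof. by move=> cC GC x; apply. Qed.

Lemma convex_hull (G : set V) : convex_set (hull G).
Proof.
move=> x y Gx Gy t t0 t1 C cC GC.
by apply: (cC) => //; [exact: Gx C cC GC | exact: Gy C cC GC].
Qed.

Lemma hullS (G G' : set V) : G `<=` G' -> hull G `<=` hull G'.
Proof. by move=> GG' x Gx C cC G'C; apply: Gx => // y /GG'/G'C. Qed.

Lemma hull_sub_hull (G H : set V) : G `<=` hull H -> hull G `<=` hull H.
Proof. by apply: hull_min; apply: convex_hull. Qed.

Lemma convex_segment (C : set V) (u w : V) (t : R) : convex_set C ->
  C u -> C w -> 0 <= t -> t <= 1 -> C (u + t *: (w - u)).
Proof.
move=> cC Cu Cw t0 t1.
have -> : u + t *: (w - u) = t *: w + (1 - t) *: u by apply/rowP => i; rewrite !mxE; ring.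
exact: cC.
Qed.

Lemma segment_inner_neq (u w : V) (t : R) : u != w -> 0 < t -> t < 1 ->
  (u + t *: (w - u) != u) && (u + t *: (w - u) != w).
Proof.
move=> uw t_gt0 t_lt1; apply/andP; split; apply: contra uw => /eqP e.
  have : t *: (w - u) = 0 by rewrite -(addKr u (t *: (w - u))) e addNr.
  by move/eqP; rewrite scaler_eq0 gt_eqF //= subr_eq0 eq_sym.
have : (1 - t) *: (w - u) = w - (u + t *: (w - u)).
  by apply/rowP => i; rewrite !mxE; ring.
by rewrite e subrr => /eqP; rewrite scaler_eq0 subr_eq0 (gt_eqF t_lt1) /= subr_eq0 eq_sym.
Qed.

Lemma hull_setU1 (G : set V) (q x : V) : G !=set0 -> hull (G `|` [set q]) x ->
  exists l s, [/\ 0 <= l, l <= 1, hull G s & x = l *: q + (1 - l) *: s].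
Proof.
move=> [g Gg]; apply: (@hull_min _
  [set x | exists l s, [/\ 0 <= l, l <= 1, hull G s & x = l *: q + (1 - l) *: s]])
  => [x1 x2 [l1 [s1 [l1_ge0 l1_le1 s1G ->]]]|y].
  move=> [l2 [s2 [l2_ge0 l2_le1 s2G ->]]] t t_ge0 t_le1.
  pose L := t * l1 + (1 - t) * l2.
  have [u_ge0 u_le1 uE] := @ratio_itv _ (t * (1 - l1)) (1 - L)
    ltac:(nra) ltac:(rewrite /L; nra).
  exists L, ((t * (1 - l1)) / (1 - L) *: s1 + (1 - (t * (1 - l1)) / (1 - L)) *: s2).
  split; [rewrite /L; nra | rewrite /L; nra | exact: convex_hull |].
  apply/rowP => i; rewrite !mxE.
  move: uE; set u := _ / _ => uE.
  transitivity (L * q 0 i + u * (1 - L) * s1 0 i + ((1 - L) - u * (1 - L)) * s2 0 i).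
    by rewrite uE /L; ring.
  ring.
move=> [Gy | ->].
  exists 0, y; split; rewrite ?lexx ?ler01 //; first exact: subset_hull.
  by rewrite scale0r add0r subr0 scale1r.
exists 1, g; split; rewrite ?lexx ?ler01 //; first exact: subset_hull.
by rewrite subrr scale0r addr0 scale1r.
Qed.

Lemma anti_exchange (G : set V) (y q : V) : G !=set0 ->
  hull (G `|` [set y]) q -> hull (G `|` [set q]) y -> y != q -> hull G y.
Proof.
move=> G_n0 /(hull_setU1 G_n0) [mu [s2 [mu_ge0 mu_le1 s2G qE]]].
move=> /(hull_setU1 G_n0) [la [s1 [la_ge0 la_le1 s1G yE]]] y_neq_q.
have b_neq0 : 1 - la * mu != 0.
  apply: contra y_neq_q; rewrite subr_eq0 eq_sym => /eqP lamu1.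
  have la1 : la = 1 by nra.
  by rewrite yE la1 subrr scale0r addr0 scale1r.
have [u_ge0 u_le1 _] := @ratio_itv _ (1 - la) (1 - la * mu) ltac:(nra) ltac:(nra).
suff -> : y = (1 - la) / (1 - la * mu) *: s1 + (1 - (1 - la) / (1 - la * mu)) *: s2.
  exact: convex_hull.
apply/rowP => i; rewrite !mxE; apply: (mulfI b_neq0).
have := congr1 (fun v : V => v 0 i) yE; rewrite qE !mxE => yiE.
have -> : (1 - la * mu) * y 0 i = (1 - la) * s1 0 i + la * (1 - mu) * s2 0 i.
  apply/eqP; rewrite -subr_eq0; apply/eqP.
  transitivity (y 0 i - (la * (mu * y 0 i + (1 - mu) * s2 0 i) + (1 - la) * s1 0 i)).
    ring.
  by rewrite -yiE subrr.
by field.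
Qed.

Section Update.
Variables (n : nat) (Z : 'I_n -> V) (c : 'I_n) (q : V).
Local Notation Zq := [eta Z with c |-> q].

Lemma range_update : range Zq `<=` Z @` [set~ c] `|` [set q].
Proof.
move=> _ [i _ <-] /=; case: eqP => [_ | /eqP ic]; first by right.
by left; exists i => //; apply/eqP.
Qed.

Lemma range_sub_setU1 : range Z `<=` Z @` [set~ c] `|` [set Z c].
Proof.
move=> _ [i _ <-]; have [-> | ic] := eqVneq i c; first by right.
by left; exists i => //; apply/eqP.
Qed.

Lemma hull_but_update (i : 'I_n) : (i != c -> hull (Z @` [set~ i]) q) ->
  hull (Zq @` [set~ i]) `<=` hull (Z @` [set~ i]).
Proof.
move=> qZ; apply: hull_sub_hull.
move=> _ [j ji <-] /=; case: eqP => [jc | _]; last by apply: subset_hull; exists j.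
by apply: qZ; apply/eqP => ic; apply: ji; rewrite jc ic.
Qed.

Lemma vertex_notin_hull_update : Z @` [set~ c] !=set0 -> hull (range Z) q ->
  q != Z c -> ~ hull (Z @` [set~ c]) (Z c) -> ~ hull (range Zq) (Z c).
Proof.
move=> Zc_n0 qZ qNZc ZcN /(hullS range_update) ZcH; apply: ZcN.
by apply: (anti_exchange Zc_n0 (hullS range_sub_setU1 qZ) ZcH); rewrite eq_sym.
Qed.

End Update.

End ConvexHull.

Section HullCore.
Variables (R : realType) (d : nat) (X : set 'rV[R]_d).
Local Notation V := 'rV[R]_d.

Definition hull_core n (Y : 'I_n -> V) : set V :=
  [set x | forall i, hull (Y @` [set~ i]) x].

Definition inner_segment_point n (Y : 'I_n -> V) :=
  exists a b t, [/\ a != b, 0 < t, t < 1 & X (Y a + t *: (Y b - Y a))].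

Lemma helly_prop_of_hull_core K :
  (forall n (Y : 'I_n -> V), (K < n)%N -> (forall i, X (Y i)) ->
     X `&` hull_core Y !=set0) ->
  helly_prop X K.
Proof.
move=> core_meets n; elim: n => [|n IH] F F_convex F_helly.
  have [|x [Xx _]] := F_helly [set: 'I_0]%SET; first by rewrite cardsT card_ord.
  by exists x; split => // -[].
have [le_nK | lt_Kn] := leqP n.+1 K.
  have [|x [Xx Fx]] := F_helly [set: 'I_n.+1]%SET; first by rewrite cardsT card_ord.
  by exists x; split => // i; apply: Fx; rewrite inE.
have all_but (j : 'I_n.+1) : exists y, X y /\ forall i, F (lift j i) y.
  apply: (IH (F \o lift j)) => [i | I card_I]; first exact: F_convex.
  have [|x [Xx Fx]] := F_helly (lift j @: I).
    by rewrite card_imset //; exact: lift_inj.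
  by exists x; split => // i iI; apply: Fx; apply: imset_f.
have [Y /all_and2 [XY YF]] := fin_all_exists all_but.
have [x [Xx x_core]] := core_meets _ Y lt_Kn XY.
exists x; split => // i; apply: hull_min (x_core i); first exact: F_convex.
move=> _ [j ji <-]; have [k -> _] := unlift_some (introN eqP ji); exact: YF.
Qed.

Lemma hull_core_vertex n (Z : 'I_n -> V) (i : 'I_n) :
  ~ (X `&` hull_core Z !=set0) -> X (Z i) -> ~ hull (Z @` [set~ i]) (Z i).
Proof.
move=> core0 XZi ZiH; apply: core0; exists (Z i); split => // j.
have [-> // | ji] := eqVneq j i.
by apply: subset_hull; exists i => // ij; rewrite ij eqxx in ji.
Qed.

Section MinimalFamily.
Variables (n : nat) (Z : 'I_n -> V).
Hypothesis XZ : forall i, X (Z i).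
Hypothesis Z_minimal : forall Z' : 'I_n -> V, range Z' `<=` hull (range Z) ->
  (X `&` hull (range Z)) `\` hull (range Z') !=set0 ->
  (forall i, X (Z' i)) -> X `&` hull_core Z' !=set0.

Lemma hull_core_update (c : 'I_n) (q : V) : ~ (X `&` hull_core Z !=set0) ->
  Z @` [set~ c] !=set0 -> X q -> hull (range Z) q -> q != Z c ->
  X `&` hull_core [eta Z with c |-> q] !=set0.
Proof.
move=> core0 Zc_n0 Xq qZ qNZc.
apply: Z_minimal => [_ [i _ <-] /= | | i /=];
  try by case: eqP => // _; apply: subset_hull.
exists (Z c); split; first by split => //; apply: subset_hull.
exact: vertex_notin_hull_update Zc_n0 qZ qNZc (hull_core_vertex core0 (XZ c)).
Qed.

Lemma hull_core_of_inner_segment_point :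
  inner_segment_point Z -> X `&` hull_core Z !=set0.
Proof.
move=> [a [b [t [ab t_gt0 t_lt1 Xz]]]]; apply: contrapT => core0.
set z := Z a + t *: (Z b - Z a) in Xz.
have ZZ i : hull (range Z) (Z i) by apply: subset_hull; exists i.
have Z_but i j : i != j -> hull (Z @` [set~ i]) (Z j).
  by move=> ij; apply: subset_hull; exists j => // ji; rewrite ji eqxx in ij.
have but_n0 i : Z @` [set~ i] !=set0.
  have [ai | ai] := eqVneq a i.
    by exists (Z b), b => // bi; rewrite bi -ai eqxx in ab.
  by exists (Z a), a => // ai'; rewrite ai' eqxx in ai.
have Zab : Z a != Z b.
  apply/eqP => Zab; apply: (hull_core_vertex core0 (XZ a)).
  by rewrite Zab; apply: Z_but.
have /andP [za zb] := segment_inner_neq Zab t_gt0 t_lt1.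
have z_but i : i != a -> i != b -> hull (Z @` [set~ i]) z.
  by move=> ia ib; apply: convex_segment (Z_but _ _ ia) (Z_but _ _ ib) _ _;
    rewrite ?ltW //; apply: convex_hull.
have zZ : hull (range Z) z.
  by apply: convex_segment (ZZ a) (ZZ b) _ _; rewrite ?ltW //; apply: convex_hull.
have [p [Xp p_core]] := hull_core_update core0 (but_n0 a) Xz zZ za.
have p_but i : i != b -> hull (Z @` [set~ i]) p.
  by move=> ib; apply: hull_but_update (p_core i) => ia; apply: z_but.
have pNZb : p != Z b.
  apply/eqP => pZb; apply: (vertex_notin_hull_update (but_n0 b) zZ zb).
    exact: hull_core_vertex core0 (XZ b).
  rewrite -pZb; apply: hullS (p_core b) => _ [j jb <-] /=.
  case: eqP => [_ | /eqP ja]; first by exists b; rewrite //= eqxx.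
  by exists j => //=; case: eqP.
have pZ : hull (range Z) p.
  by apply: hullS (p_but a ab) => _ [j _ <-]; exists j.
have [r [Xr r_core]] := hull_core_update core0 (but_n0 b) Xp pZ pNZb.
apply: core0; exists r; split => // i.
by apply: hull_but_update (r_core i) => ib; apply: p_but.
Qed.

End MinimalFamily.

Hypothesis X_hull_finite : forall n (Y : 'I_n -> V),
  exists (T : finType) (g : T -> V), X `&` hull (range Y) `<=` range g.

Lemma hull_descent n (Y : 'I_n -> V) (Q : ('I_n -> V) -> Prop) :
  (forall Z, range Z `<=` hull (range Y) ->
     (forall Z', range Z' `<=` hull (range Z) ->
        (X `&` hull (range Z)) `\` hull (range Z') !=set0 -> Q Z') ->
     Q Z) ->
  forall Z, range Z `<=` hull (range Y) -> Q Z.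
Proof.
move=> Q_desc; have [T [g Xg]] := X_hull_finite Y.
pose mu (Z : 'I_n -> V) := #|[set t : T | hull (range Z) (g t)]|.
suff : forall N Z, (mu Z < N)%N -> range Z `<=` hull (range Y) -> Q Z.
  by move=> + Z; apply.
elim=> // N IH Z muZ ZY; apply: Q_desc => // Z' Z'Z [x [[Xx xZ] xNZ']].
have Z'Z_hull := hull_sub_hull Z'Z.
have ZY_hull := hull_sub_hull ZY.
apply: IH; last by move=> y /Z'Z /ZY_hull.
rewrite ltnS in muZ; apply: leq_trans _ muZ; apply: proper_card.
rewrite properE; apply/andP; split.
  by apply/fintype.subsetP => t; rewrite !in_setE => /Z'Z_hull.
have [t _ gt] := Xg x (conj Xx (ZY_hull _ xZ)).
by apply/fintype.subsetPn; exists t; [|apply/negP]; rewrite inE /= gt.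
Qed.

Lemma hull_core_meets K :
  (forall n (Y : 'I_n -> V), (K < n)%N -> (forall i, X (Y i)) ->
     inner_segment_point Y) ->
  forall n (Y : 'I_n -> V), (K < n)%N -> (forall i, X (Y i)) ->
    X `&` hull_core Y !=set0.
Proof.
move=> segment n Y lt_Kn XY.
pose Q (Z : 'I_n -> V) := (forall i, X (Z i)) -> X `&` hull_core Z !=set0.
apply: (@hull_descent _ _ Q) XY; last exact: subset_hull.
move=> Z _ Z_minimal XZ.
exact: hull_core_of_inner_segment_point XZ Z_minimal (segment n Z lt_Kn XZ).
Qed.

End HullCore.

Lemma exists_collision (T : finType) (A : {pred T}) n (f : 'I_n -> T) :
  (#|A| < n)%N -> (forall i, f i \in A) -> exists a b, a != b /\ f a = f b.
Proof.
move=> lt_An fA; apply: contrapT => f_inj.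
have /card_imset card_f : injective f.
  move=> a b fab; apply: contrapT => ab.
  by apply: f_inj; exists a, b; split => //; apply/eqP.
have : (#|f @: [set: 'I_n]%SET| <= #|A|)%N.
  by apply: subset_leq_card; apply/fintype.subsetP => _ /imsetP [i _ ->].
by rewrite card_f cardsT card_ord leqNgt lt_An.
Qed.

Section IntegerPoints.
Variables (R : realType) (d : nat).
Local Notation V := 'rV[R]_d.

Lemma convex_box (N : R) : convex_set [set x : V | forall c, `|x ord0 c| <= N].
Proof.
move=> x y Bx By t t_ge0 t_le1 c; rewrite !mxE.
apply: le_trans (ler_normD _ _) _.
rewrite !normrM (ger0_norm t_ge0) (@ger0_norm _ (1 - t)) ?subr_ge0 //.
by have := Bx c; have := By c; nra.
Qed.

Lemma hull_bounded n (Y : 'I_n -> V) :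
  exists N : nat, hull (range Y) `<=` [set x | forall c, `|x ord0 c| <= N%:R].
Proof.
exists (\max_(i < n) \max_(c < d) Num.bound `|Y i ord0 c|)%N.
apply: hull_min; first exact: convex_box.
move=> _ [i _ <-] c; apply/ltW/(lt_le_trans (archi_boundP (normr_ge0 _))).
rewrite ler_nat; apply: leq_trans (leq_bigmax i).
exact: (leq_bigmax (F := fun c => Num.bound `|Y i ord0 c|) c).
Qed.

Lemma int_box_finite (N : nat) : exists (T : finType) (g : T -> V),
  [set x : V | forall c, (exists e : int, x ord0 c = e%:~R) /\ `|x ord0 c| <= N%:R]
    `<=` range g.
Proof.
exists {ffun 'I_d -> 'I_(N + N).+1}%type.
exists (fun v : {ffun 'I_d -> 'I_(N + N).+1} => \row_c ((v c : nat)%:R - N%:R)).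
move=> x x_int.
have coord c : exists o : 'I_(N + N).+1, (o : nat)%:R - N%:R = x ord0 c.
  have [[e ->] e_le] := x_int c; rewrite -intr_norm pmulrn ler_int in e_le.
  have o_lt : (absz (e + N%:Z)%R < (N + N).+1)%N by lia.
  by exists (Ordinal o_lt); rewrite /= !pmulrn -intrB; congr intmul; lia.
have [f fE] := fin_all_exists coord.
by exists [ffun c => f c] => //; apply/rowP => c; rewrite !mxE ffunE fE.
Qed.

End IntegerPoints.

Section ResidueLattice.
Variables (R : realType) (d m : nat) (S : {set 'I_m}).
Local Notation V := 'rV[R]_d.
Local Notation A := (@residue_set R m S).
Local Notation X := (@cart_pow R d A).

Lemma residue_set_int (x : R) : A x -> exists e : int, x = e%:~R.
Proof. by move=> [s [z [_ ->]]]; exists (s%:Z + m%:Z * z); rewrite intrD intrM. Qed.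

Lemma residue_hull_finite n (Y : 'I_n -> V) :
  exists (T : finType) (g : T -> V), X `&` hull (range Y) `<=` range g.
Proof.
have [N YN] := hull_bounded Y; have [T [g box_g]] := int_box_finite R d N.
exists T, g => x [Xx /YN xN]; apply: box_g => c.
by split; [apply: residue_set_int | apply: xN].
Qed.

Lemma residue_set_step (m_gt0 : (0 < m)%N) (s : 'I_m) (z u : int) (j : nat) :
  step_res m_gt0 s (absz (u %% m)%Z) j \in S ->
  A (s%:R + m%:R * z%:~R + j%:R * u%:~R).
Proof.
set w := absz (u %% m)%Z; set q := ((s + j * w) %/ m)%N => step_in.
have wE : w%:Z = (u %% m)%Z by rewrite gez0_abs // modz_ge0 // -lt0n.
exists (step_res m_gt0 s w j), (z + j%:Z * (u %/ m)%Z + q%:Z); split => //.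
have sjwE : s%:Z + j%:Z * w%:Z = q%:Z * m%:Z + ((s + j * w) %% m)%N%:Z.
  by rewrite -!PoszM -!PoszD -divn_eq.
have : (s%:Z + m%:Z * z + j%:Z * u = ((s + j * w) %% m)%N%:Z
          + m%:Z * (z + j%:Z * (u %/ m)%Z + q%:Z))%R.
  transitivity (s%:Z + j%:Z * w%:Z + m%:Z * (z + j%:Z * (u %/ m)%Z))%R.
    by rewrite {1}(divz_eq u m) -wE; ring.
  by rewrite sjwE; ring.
by move/(congr1 (fun e : int => e%:~R : R)) => /=; rewrite !(intrD, intrM) => ->.
Qed.

Lemma cart_pow_residue_decomp (x : V) : X x ->
  exists s : {ffun 'I_d -> 'I_m}, s \in ffun_on S /\
    forall c, exists z : int, x ord0 c = (s c)%:R + m%:R * z%:~R.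
Proof.
move=> Xx; have /fin_all_exists [sz szE] : forall c, exists sz : 'I_m * int,
    sz.1 \in S /\ x ord0 c = sz.1%:R + m%:R * sz.2%:~R.
  by move=> c; have [s [z sz]] := Xx c; exists (s, z).
exists [ffun c => (sz c).1]; split.
  by apply/ffun_onP => c; rewrite ffunE; case: (szE c).
by move=> c; exists (sz c).2; rewrite ffunE; case: (szE c).
Qed.

Lemma residue_inner_segment k : (2 <= m)%N -> #|S| = k ->
  (d * m * (m - k) < pdiv m * (m - 1))%N ->
  forall n (Y : 'I_n -> V), (k ^ d < n)%N -> (forall i, X (Y i)) ->
    inner_segment_point X Y.
Proof.
move=> m_ge2 card_S lt_dm n Y lt_n XY.
have m_gt0 : (0 < m)%N by apply: leq_trans m_ge2.
have [cls /all_and2 [cls_S clsE]] :=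
  fin_all_exists (fun i => cart_pow_residue_decomp (XY i)).
have [a [b [ab eq_ab]]] : exists a b, a != b /\ cls a = cls b.
  by apply: exists_collision cls_S; rewrite card_ffun_on card_S card_ord.
have [za zaE] := fin_all_exists (clsE a).
have [zb zbE] := fin_all_exists (clsE b).
have card_notS : #|~: S| = (m - k)%N by rewrite cardsCs finset.setCK card_ord card_S.
have cls_aS c : cls a c \in S by apply/ffun_onP.
have [j j_gt0 j_good] := @exists_common_good_step _ m_gt0 _ _ (cls a)
  (fun c => absz ((zb c - za c) %% m)%Z) cls_aS ltac:(by rewrite card_notS).
have m_neq0 : m%:R != 0 :> R by rewrite pnatr_eq0 -lt0n.
exists a, b, (j%:R / m%:R); split => //.
- by rewrite divr_gt0 ?ltr0n.
- by rewrite ltr_pdivrMr ?ltr0n // mul1r ltr_nat.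
move=> c; rewrite !mxE zaE zbE -eq_ab.
have -> : (cls a c)%:R + m%:R * (za c)%:~R + j%:R / m%:R *
    ((cls a c)%:R + m%:R * (zb c)%:~R - ((cls a c)%:R + m%:R * (za c)%:~R))
  = (cls a c)%:R + m%:R * (za c)%:~R + j%:R * (zb c - za c)%:~R :> R.
  by rewrite intrB; field.
exact: residue_set_step.
Qed.

End ResidueLattice.

Theorem theorem3 (R : realType) (m k d : nat) (S : {set 'I_m}) :
  (2 <= m)%N -> (0 < k)%N -> (0 < d)%N ->
  (d * m * (m - k) < pdiv m * (m - 1))%N ->
  #|S| = k ->
  helly_number_le (@cart_pow R d (@residue_set R m S)) (k ^ d).
Proof.
move=> m_ge2 _ _ lt_dm card_S; exists (k ^ d)%N; split => //.
apply: helly_prop_of_hull_core => n Y lt_n XY.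
apply: hull_core_meets lt_n XY; first exact: residue_hull_finite.
exact: residue_inner_segment.
Qed.
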